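(* Let $G$ be a finite group of order $p^a m$, where $p$ is a prime and $m$ is not divisible by $p$, and let $P$ be a Sylow $p$-subgroup of $G$. If $w$ is any group word such that $w(G)$ is nilpotent, then \[ P\cap w(G)=\langle P\cap G_{w^m}\rangle . \]
   Context: For a group word $w$ and a group $G$, $G_w$ denotes the set of all values of $w$ in $G$ and $w(G)=\langle G_w\rangle$ is the verbal subgroup of $w$. For an integer $m$, $G_{w^m}=\{g^m : g\in G_w\}$. *)

From mathcomp Require Import all_boot all_fingroup all_solvable.
Set Implicit Arguments. Unset Strict Implicit. Unset Printing Implicit Defensive.
Local Open Scope group_scope.

(* A group word in the n variables x_0, ..., x_{n-1} (an element of the free
   group on n generators, given syntactically). *)
Inductive word (n : nat) : Type :=
  | wVar of 'I_n
  | wOne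
  | wMul of word n & word n
  | wInv of word n.

Fixpoint weval (gT : finGroupType) (n : nat) (f : 'I_n -> gT) (w : word n) : gT :=
  match w with
  | wVar i => f i
  | wOne => 1
  | wMul u v => weval f u * weval f v
  | wInv u => (weval f u)^-1
  end.

Definition word_values (gT : finGroupType) (G : {set gT}) (n : nat) (w : word n)
  : {set gT} :=
  [set weval (fun i => f i) w | f : {ffun 'I_n -> gT} in [set f : {ffun 'I_n -> gT} | [forall i, f i \in G]]].

Definition verbal (gT : finGroupType) (G : {set gT}) (n : nat) (w : word n) : {set gT} :=
  <<word_values G w>>.

Definition word_values_pow (gT : finGroupType) (G : {set gT}) (n : nat) (w : word n)
  (m : nat) : {set gT} :=
  [set g ^+ m | g in word_values G w].

From mathcomp Require Import all_boot all_fingroup all_solvable.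
Set Implicit Arguments. Unset Strict Implicit. Unset Printing Implicit Defensive.
Local Open Scope group_scope.

(* Put V := w(G).  Word values are permuted by conjugation, so
   V <| G; as V is nilpotent, P :&: V is the Sylow p-subgroup 'O_p(V) of V.
   For g in G_w, since #[g] divides p^a * m, g ^+ m is a p-element of V, hence
   lies in P :&: V and therefore in P :&: G_{w^m}; as m is coprime to p, the
   p-part g.`_p is a power of g ^+ m.  So H := <<P :&: G_{w^m}>> is a subgroup
   of 'O_p(V) containing the p-parts of a generating set of V.  In a nilpotent
   group this forces H = 'O_p(V): V = H * 'O_p^'(V), and intersecting with the
   p-group 'O_p(V) (modular law) leaves H; this last step is proved for an
   arbitrary set of primes pi.
   The file first proves the facts about word values, then two elementary
   facts about powers of elements, then the general statement on 'O_p of a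
   nilpotent group, and derives the theorem from them. *)

Lemma weval_in (gT : finGroupType) (G : {group gT}) n (f : 'I_n -> gT)
    (w : word n) :
  (forall i, f i \in G) -> weval f w \in G.
Proof.
by move=> fG; elim: w => [i||u IHu v IHv|u IHu] /=; rewrite ?group1 ?groupM ?groupV.
Qed.

Lemma weval_conj (gT : finGroupType) n (f : 'I_n -> gT) (w : word n) x :
  weval (fun i => f i ^ x) w = weval f w ^ x.
Proof.
by elim: w => [i||u IHu v IHv|u IHu] /=; rewrite ?conj1g ?conjMg ?conjVg ?IHu ?IHv.
Qed.

Lemma word_valuesP (gT : finGroupType) (G : {group gT}) n (w : word n) g :
  reflect (exists2 f : {ffun 'I_n -> gT}, (forall i, f i \in G) & g = weval f w)
          (g \in word_values G w).
Proof.
apply: (iffP imsetP) => [[f] | [f fG ->]].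
  by rewrite inE => /forallP fG ->; exists f.
by exists f; rewrite // inE; apply/forallP.
Qed.

Lemma word_values_sub (gT : finGroupType) (G : {group gT}) n (w : word n) :
  word_values G w \subset G.
Proof. by apply/subsetP=> g /word_valuesP [f fG ->]; apply: weval_in. Qed.

Lemma word_values_conj (gT : finGroupType) (G : {group gT}) n (w : word n) g x :
  x \in G -> g \in word_values G w -> g ^ x \in word_values G w.
Proof.
move=> Gx /word_valuesP [f fG ->]; apply/word_valuesP.
exists [ffun i => f i ^ x] => [i|]; first by rewrite ffunE groupJ.
rewrite -weval_conj; elim: w {fG} => [i||u IHu v IHv|u IHu] /=;
  by rewrite ?ffunE ?IHu ?IHv.
Qed.

Lemma verbal_normal (gT : finGroupType) (G : {group gT}) n (w : word n) :
  verbal G w <| G.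
Proof.
rewrite /normal gen_subG word_values_sub /=; apply: norms_gen.
apply/normsP => x Gx; apply/eqP; rewrite eqEcard cardJg leqnn andbT.
by apply/subsetP => y; rewrite mem_conjg => /(word_values_conj Gx); rewrite conjgKV.
Qed.

Lemma p_elt_expm (gT : finGroupType) (x : gT) p a m :
  prime p -> #[x] %| p ^ a * m -> p.-elt (x ^+ m).
Proof.
move=> pp ox; have: #[x ^+ m] %| p ^ a.
  by rewrite order_dvdn -expgM mulnC -order_dvdn.
by move/pnat_dvd; apply; rewrite pnatX pnat_id.
Qed.

Lemma constt_in_cycle_expm (gT : finGroupType) (x : gT) p m :
  p^'.-nat m -> x.`_p \in <[x ^+ m]>.
Proof.
move=> p'm; have: coprime #[x.`_p] m.
  by apply: (@pnat_coprime p) => //; apply: p_elt_constt.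
rewrite -generator_coprime /generator => /eqP gen_xp.
by rewrite -cycle_subG gen_xp cycle_subG -consttX cycle_constt.
Qed.

Lemma nilpotent_pcore_gen_pparts (gT : finGroupType) (S : {set gT})
    (H : {group gT}) (pi : nat_pred) :
  nilpotent <<S>> -> H \subset 'O_pi(<<S>>) -> {in S, forall x, x.`_pi \in H} ->
  H :=: 'O_pi(<<S>>).
Proof.
set V := <<S>>; set K := 'O_pi^'(V) => nilV sHO Spi.
have sOV : 'O_pi(V) \subset V := pcore_sub pi V.
have nKH : H \subset 'N(K).
  by rewrite (subset_trans (subset_trans sHO sOV)) ?normal_norm ?pcore_normal.
have sVHK : V \subset H * K.
  rewrite -norm_joinEl // gen_subG; apply/subsetP => x Sx.
  suff: x \in H * K by rewrite -norm_joinEl.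
  rewrite -(consttC pi x) mem_mulg ?Spi //.
  rewrite (mem_Hall_pcore (nilpotent_pcore_Hall pi^' nilV)) ?p_elt_constt //.
  by rewrite groupX ?mem_gen.
apply/eqP; rewrite eqEsubset sHO /=.
have: 'O_pi(V) \subset H * K :&: 'O_pi(V) by rewrite subsetI (subset_trans sOV sVHK) subxx.
rewrite -group_modl // setIC coprime_TIg ?mulg1 //.
by apply: (@pnat_coprime pi); apply: pcore_pgroup.
Qed.

Theorem theorem1p4 (gT : finGroupType) (G P : {group gT}) (p a m : nat)
  (n : nat) (w : word n) :
  prime p -> ~~ (p %| m) -> #|G| = (p ^ a * m)%N -> P \in 'Syl_p(G) ->
  nilpotent (verbal G w) ->
  P :&: verbal G w = <<P :&: word_values_pow G w m>>.
Proof.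
move=> pp; rewrite -p'natE // => p'm cardG; rewrite inE => sylP nilV.
set A := word_values G w; set H := <<P :&: word_values_pow G w m>>.
have sAG : A \subset G := word_values_sub G w.
(* P :&: w(G) is a Sylow p-subgroup of the nilpotent normal subgroup w(G). *)
have PVeqO : P :&: verbal G w = 'O_p(verbal G w).
  exact: nilpotent_Hall_pcore nilV (Hall_setI_normal (verbal_normal G w) sylP).
(* m-th powers of word values are p-elements of w(G), hence lie in P. *)
have powA g : g \in A -> g ^+ m \in P :&: word_values_pow G w m.
  move=> Ag; rewrite inE (imset_f (fun x => x ^+ m) Ag) andbT.
  suff: g ^+ m \in P :&: verbal G w by case/setIP.
  rewrite PVeqO (mem_Hall_pcore (nilpotent_pcore_Hall p nilV)) ?groupX ?mem_gen //.
  by apply: (@p_elt_expm _ _ p a m pp); rewrite -cardG order_dvdG ?(subsetP sAG).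
have sHPV : H \subset P :&: verbal G w.
  rewrite gen_subG setIS //; apply/subsetP => _ /imsetP [g Ag ->].
  by rewrite groupX ?mem_gen.
rewrite PVeqO; apply/esym/(nilpotent_pcore_gen_pparts nilV); first by rewrite -PVeqO sHPV.
move=> g Ag; apply: subsetP (constt_in_cycle_expm g p'm).
by rewrite cycle_subG mem_gen ?powA.
Qed.
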